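(* For all $n\ge 1$, $|F_n(321,3142)|=2^{n-1}$.
   Context: A permutation $\pi$ avoids a classical pattern $p\in S_k$ if no subsequence of $\pi$ of length $k$ is order-isomorphic to $p$. A Fishburn permutation is a permutation $\pi=\pi_1\cdots\pi_n$ of $[n]$ for which there are no indices $i<j$ with $\pi_j<\pi_i<\pi_{i+1}$ and $\pi_i=\pi_j+1$. $F_n(\sigma_1,\dots,\sigma_k)$ denotes the set of Fishburn permutations of length $n$ avoiding each of the classical patterns $\sigma_1,\dots,\sigma_k$. *)

From mathcomp Require Import all_boot.
From mathcomp Require Import fingroup perm.
Set Implicit Arguments. Unset Strict Implicit. Unset Printing Implicit Defensive.

(* A permutation pi of [n] is represented as pi : {perm 'I_n}; position i
   (0-based) holds value pi i (0-based).  Shifting by 1 does not affect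
   order-isomorphism or the Fishburn condition. *)

Definition contains (n : nat) (pi : {perm 'I_n}) (p : seq nat) : bool :=
  [exists f : {ffun 'I_(size p) -> 'I_n},
     [forall a : 'I_(size p), forall b : 'I_(size p),
        ((a < b) ==> (f a < f b)) &&
        ((pi (f a) < pi (f b)) == (nth 0 p a < nth 0 p b))]].

Definition avoids (n : nat) (pi : {perm 'I_n}) (p : seq nat) : bool :=
  ~~ contains pi p.

Definition fishburn (n : nat) (pi : {perm 'I_n}) : bool :=
  ~~ [exists i : 'I_n, exists i1 : 'I_n, exists j : 'I_n,
        [&& val i1 == (val i).+1, i < j, pi j < pi i, pi i < pi i1 &
            val (pi i) == (val (pi j)).+1]].

Definition F_321_3142 (n : nat) : {set {perm 'I_n}} :=
  [set pi | [&& fishburn pi, avoids pi [:: 3; 2; 1] & avoids pi [:: 3; 1; 4; 2]]].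

(* Call a permutation pi of 'I_n bounded below when i <= pi i + 1 for every
   position i: no entry lies more than one below its own position.  The proof
   has two parts.

   (1) F_n(321,3142) is exactly the set of bounded-below permutations.  Both
   directions go through the set larger_before pi p of earlier positions
   x < p carrying a larger entry pi x > pi p.  A pigeonhole count shows that
   in a bounded-below permutation every p has at most one such x, while a
   Fishburn violation, a 321 and a 3142 each produce a p with two of them.
   Conversely p always has at least p - pi p of them, and if some p had two,
   the value-smallest one a, its right neighbour a+1 and the position of the
   value pi a - 1 would form a 321, a 3142 or a Fishburn violation.

   (2) Removing the last position, lift_perm ord_max j s is bounded below
   iff s is and j >= n - 1, so each new position offers two choices and
   there are 2^(n-1) bounded-below permutations of 'I_n. *)

From mathcomp Require Import all_boot.
From mathcomp Require Import fingroup perm.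
From mathcomp Require Import zify.

Set Implicit Arguments.
Unset Strict Implicit.
Unset Printing Implicit Defensive.

Lemma card_ord_lt n k : k <= n -> #|[set v : 'I_n | v < k]| = k.
Proof.
move=> le_kn; have inj : injective (widen_ord le_kn) by move=> a b [] /val_inj.
rewrite -[RHS]card_ord -(card_imset _ inj).
apply: eq_card => v; rewrite inE; apply/idP/imsetP => [lt_vk | [w _ ->]].
  by exists (Ordinal lt_vk); [rewrite inE | apply: val_inj].
by rewrite /= ltn_ord.
Qed.

Lemma card_ord_ge n k : k <= n -> #|[set v : 'I_n | k <= v]| = n - k.
Proof.
move=> le_kn; have := cardsC [set v : 'I_n | v < k].
rewrite card_ord_lt // card_ord.
have -> : ~: [set v : 'I_n | v < k] = [set v : 'I_n | k <= v].
  by apply/setP => v; rewrite !inE -leqNgt.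
lia.
Qed.

Definition bounded_below n (pi : {perm 'I_n}) : bool :=
  [forall i : 'I_n, i <= (pi i).+1].

Definition larger_before n (pi : {perm 'I_n}) (p : 'I_n) : {set 'I_n} :=
  [set x : 'I_n | (x < p) && (pi p < pi x)].

Lemma larger_beforeE n (pi : {perm 'I_n}) (p x : 'I_n) :
  (x \in larger_before pi p) = (x < p) && (pi p < pi x).
Proof. by rewrite inE. Qed.

(* Pigeonhole: larger_before pi p and the positions >= p all carry values
   >= p - 1 in a bounded-below permutation; there are only n - p + 1 such
   values. *)
Lemma larger_before_le1 n (pi : {perm 'I_n}) (p : 'I_n) :
  bounded_below pi -> #|larger_before pi p| <= 1.
Proof.
move=> /forallP bnd; set L := larger_before pi p; set R := [set k : 'I_n | p <= k].
have LR0 : L :&: R = set0.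
  by apply/setP => x; rewrite !inE; apply/negP => /andP [/andP [? _] ?]; lia.
have img : pi @: (L :|: R) \subset [set v : 'I_n | p.-1 <= v].
  apply/subsetP => v /imsetP [k kLR ->]; rewrite inE.
  have := bnd p; have := bnd k; move: kLR; rewrite !inE => /orP [/andP [_ ?] | ?]; lia.
have := subset_leq_card img; rewrite card_imset; last exact: perm_inj.
have := cardsUI L R; rewrite LR0 cards0 !card_ord_ge; have := ltn_ord p; lia.
Qed.

(* At most pi p earlier entries are smaller than pi p, so at least
   p - pi p of the p earlier entries are larger. *)
Lemma larger_before_ge n (pi : {perm 'I_n}) (p : 'I_n) :
  p - pi p <= #|larger_before pi p|.
Proof.
set S := [set x : 'I_n | (x < p) && (pi x < pi p)].
have cardS : #|S| <= pi p.
  have img : pi @: S \subset [set v : 'I_n | v < pi p].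
    by apply/subsetP => v /imsetP [k]; rewrite !inE => /andP [_ lt_k] ->.
  have := subset_leq_card img.
  by rewrite card_imset ?card_ord_lt //; [apply: ltnW | apply: perm_inj].
have cover : [set x : 'I_n | x < p] \subset S :|: larger_before pi p.
  apply/subsetP => x; rewrite !inE => lt_xp; rewrite lt_xp /=.
  case: ltngtP => // /val_inj/perm_inj eq_xp.
  by rewrite eq_xp ltnn in lt_xp.
have := subset_leq_card cover; rewrite card_ord_lt; last exact: ltnW.
move=> le_p_SL; rewrite leq_subLR; apply: (leq_trans le_p_SL).
by rewrite cardsU (leq_trans (leq_subr _ _)) // leq_add2r.
Qed.

Lemma occurrence n (pi : {perm 'I_n}) (p : seq nat) : contains pi p ->
  exists f : 'I_(size p) -> 'I_n, forall a b : 'I_(size p),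
    (a < b -> f a < f b) /\ (pi (f a) < pi (f b)) = (nth 0 p a < nth 0 p b).
Proof.
case/existsP => f /forallP occ; exists f => a b.
by have /andP [/implyP lt_f /eqP eq_pi] := forallP (occ a) b.
Qed.

Lemma contains321P n (pi : {perm 'I_n}) :
  reflect (exists a b c : 'I_n, [/\ a < b, b < c, pi b < pi a & pi c < pi b])
          (contains pi [:: 3; 2; 1]).
Proof.
apply: (iffP idP) => [/occurrence [f occ] | [a [b [c lt_abc]]]].
  have [lt01 _] := occ (@Ordinal 3 0 isT) (@Ordinal 3 1 isT).
  have [lt12 _] := occ (@Ordinal 3 1 isT) (@Ordinal 3 2 isT).
  have [_ gt01] := occ (@Ordinal 3 1 isT) (@Ordinal 3 0 isT).
  have [_ gt12] := occ (@Ordinal 3 2 isT) (@Ordinal 3 1 isT).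
  exists (f (@Ordinal 3 0 isT)), (f (@Ordinal 3 1 isT)), (f (@Ordinal 3 2 isT)).
  by rewrite gt01 gt12 lt01 ?lt12.
apply/existsP; exists [ffun k : 'I_3 => nth a [:: a; b; c] k].
apply/forallP => k; apply/forallP => l; rewrite !ffunE; case: lt_abc => *.
by case: k => [[|[|[|k]]] ?] //; case: l => [[|[|[|l]]] ?] //=; lia.
Qed.

Lemma contains3142P n (pi : {perm 'I_n}) :
  reflect (exists a b c d : 'I_n,
             [/\ a < b < c, c < d, pi b < pi d, pi d < pi a & pi a < pi c])
          (contains pi [:: 3; 1; 4; 2]).
Proof.
apply: (iffP idP) => [/occurrence [f occ] | [a [b [c [d lt_abcd]]]]].
  have [lt01 _] := occ (@Ordinal 4 0 isT) (@Ordinal 4 1 isT).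
  have [lt12 _] := occ (@Ordinal 4 1 isT) (@Ordinal 4 2 isT).
  have [lt23 _] := occ (@Ordinal 4 2 isT) (@Ordinal 4 3 isT).
  have [_ v13] := occ (@Ordinal 4 1 isT) (@Ordinal 4 3 isT).
  have [_ v30] := occ (@Ordinal 4 3 isT) (@Ordinal 4 0 isT).
  have [_ v02] := occ (@Ordinal 4 0 isT) (@Ordinal 4 2 isT).
  exists (f (@Ordinal 4 0 isT)), (f (@Ordinal 4 1 isT)),
         (f (@Ordinal 4 2 isT)), (f (@Ordinal 4 3 isT)).
  by rewrite v13 v30 v02 lt01 ?lt12 ?lt23.
apply/existsP; exists [ffun k : 'I_4 => nth a [:: a; b; c; d] k].
apply/forallP => k; apply/forallP => l; rewrite !ffunE; case: lt_abcd => /andP [? ?] *.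
by case: k => [[|[|[|[|k]]]] ?] //; case: l => [[|[|[|[|l]]]] ?] //=; lia.
Qed.

Lemma two_larger_before n (pi : {perm 'I_n}) (x y p : 'I_n) :
  bounded_below pi -> x < y < p -> pi p < pi x -> pi p < pi y -> False.
Proof.
move=> /(larger_before_le1 p) le1 /andP [lt_xy lt_yp] gt_x gt_y.
have sub : [set x; y] \subset larger_before pi p.
  by apply/subsetP => z; rewrite !inE => /orP [] /eqP ->; apply/andP; split => //; lia.
have := subset_leq_card sub; rewrite cards2 -val_eqE (ltn_eqF lt_xy).
by move/leq_trans/(_ le1).
Qed.

(* Each forbidden configuration yields two earlier larger entries (before
   j, the 1 of the 321, the 2 of the 3142), hence bounded-below permutations
   are Fishburn and avoid 321 and 3142. *)
Lemma bounded_below_in_F n (pi : {perm 'I_n}) : bounded_below pi ->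
  [&& fishburn pi, avoids pi [:: 3; 2; 1] & avoids pi [:: 3; 1; 4; 2]].
Proof.
move=> bnd; apply/and3P; split.
- apply/existsP => [[i /existsP [i1 /existsP [j /and5P [/eqP /= i1E lt_ij gt_ij lt_ii1 _]]]]].
  have neq_i1j : i1 != j :> nat.
    by apply/eqP => /val_inj eq_i1j; rewrite -eq_i1j ltnNge (ltnW lt_ii1) in gt_ij.
  by apply: (two_larger_before bnd (_ : i < i1 < j)) => //; lia.
- by apply/contains321P => [[a [b [c [lt_ab lt_bc *]]]]];
    apply: (two_larger_before bnd (_ : a < b < c)) => //; lia.
- by apply/contains3142P => [[a [b [c [d [/andP [lt_ab lt_bc] lt_cd *]]]]]];
    apply: (two_larger_before bnd (_ : a < c < d)) => //; lia.
Qed.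

Lemma perm_attains n (pi : {perm 'I_n}) (v : nat) :
  v < n -> exists q : 'I_n, pi q = v :> nat.
Proof. by move=> lt_vn; exists ((pi^-1)%g (Ordinal lt_vn)); rewrite permKV. Qed.

(* If a is the value-smallest earlier larger entry of i, then the entry
   pi a - 1 does not occur before i: it lies in [pi i, pi a) and would be
   a smaller earlier larger entry. *)
Lemma pred_of_min_larger_after n (pi : {perm 'I_n}) (i a q : 'I_n) :
  a \in larger_before pi i ->
  (forall x, x \in larger_before pi i -> pi a <= pi x) ->
  pi q = (pi a).-1 :> nat -> i <= q.
Proof.
rewrite larger_beforeE => /andP [_ gt_a] a_min val_q; rewrite leqNgt; apply/negP => lt_qi.
have neq_qi : pi q != pi i :> nat.
  by apply: contraTneq lt_qi => /val_inj/perm_inj ->; rewrite ltnn.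
have qZ : q \in larger_before pi i by rewrite larger_beforeE lt_qi /=; lia.
by have := a_min q qZ; lia.
Qed.

(* With a1 the
   value-smallest and a2 another earlier larger entry of i, avoiding 321
   forces a1 < a2; let q hold the value pi a1 - 1 (so i <= q) and b = a1 + 1.
   If pi b < pi i then a1 b a2 q is a 3142; otherwise b is an earlier larger
   entry of i, so pi b > pi a1 and (a1, b, q) violates the Fishburn rule. *)
Lemma avoiding_larger_before_le1 n (pi : {perm 'I_n}) (i : 'I_n) :
  fishburn pi -> avoids pi [:: 3; 2; 1] -> avoids pi [:: 3; 1; 4; 2] ->
  #|larger_before pi i| <= 1.
Proof.
move=> fish no321 no3142; rewrite leqNgt; apply/negP.
case/card_gt1P => x [y [xZ yZ neq_xy]].
have [a1 a1Z a1_min] :=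
  @arg_minnP _ x (fun z => z \in larger_before pi i) (fun z => nat_of_ord (pi z)) xZ.
have [a2 a2Z neq_a21] : exists2 a2, a2 \in larger_before pi i & a2 != a1.
  by case: (eqVneq x a1) => [eq_xa1 | ?]; [exists y; rewrite // -eq_xa1 eq_sym | exists x].
move: (a1Z) (a2Z); rewrite !larger_beforeE => /andP [lt_a1i gt_a1] /andP [lt_a2i gt_a2].
have lt_v12 : pi a1 < pi a2.
  rewrite ltn_neqAle a1_min // andbT; apply: contra neq_a21 => /eqP/val_inj/perm_inj.
  by move->.
have lt_a12 : a1 < a2.
  case: ltngtP => // [lt_a21 | /val_inj eq_a12]; last by rewrite eq_a12 eqxx in neq_a21.
  by case/negP: no321; apply/contains321P; exists a2, a1, i.
have [q val_q] := @perm_attains _ pi (pi a1).-1 (leq_ltn_trans (leq_pred _) (ltn_ord _)).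
have le_iq := pred_of_min_larger_after a1Z a1_min val_q.
have lt_b : a1.+1 < n by apply: leq_trans (ltn_ord a2).
pose b := Ordinal lt_b.
case: (ltngtP (pi b) (pi i)) => [lt_bi | gt_bi | /val_inj/perm_inj eq_bi].
- have neq_ba2 : a1.+1 != a2 :> nat.
    apply/eqP => eq_ba2; move: lt_bi; rewrite (_ : b = a2); last exact: val_inj.
    by rewrite ltnNge (ltnW gt_a2).
  case/negP: no3142; apply/contains3142P; exists a1, b, a2, q.
  by rewrite /= ltnSn; split => //; lia.
- have bZ : b \in larger_before pi i by rewrite larger_beforeE gt_bi andbT /=; lia.
  have lt_v1b : pi a1 < pi b.
    rewrite ltn_neqAle a1_min // andbT.
    by apply/eqP => /val_inj/perm_inj/(congr1 val) /=; lia.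
  case/negP: fish; apply/existsP; exists a1; apply/existsP; exists b.
  by apply/existsP; exists q; apply/and5P; split => /=; lia.
- by move: lt_a2i; rewrite -eq_bi /=; lia.
Qed.

Lemma F_321_3142E n (pi : {perm 'I_n}) : (pi \in F_321_3142 n) = bounded_below pi.
Proof.
rewrite inE; apply/idP/idP => [/and3P [fish no321 no3142] | /bounded_below_in_F //].
apply/forallP => i; have := larger_before_ge pi i.
have := avoiding_larger_before_le1 i fish no321 no3142; lia.
Qed.

Lemma lift_perm_decomposition n (pi : {perm 'I_n.+1}) (i : 'I_n.+1) :
  exists s : {perm 'I_n}, pi = lift_perm i (pi i) s.
Proof.
pose f k := odflt k (unlift (pi i) (pi (lift i k))).
have liftf k : lift (pi i) (f k) = pi (lift i k).
  rewrite /f; case: unliftP => [k' -> // | /perm_inj eq_i].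
  by have := neq_lift i k; rewrite eq_i eqxx.
have inj_f : injective f.
  by move=> k1 k2 eq_f; apply: (@lift_inj _ i); apply: (@perm_inj _ pi); rewrite -!liftf eq_f.
exists (perm inj_f); apply/permP => x; case: (unliftP i x) => [k -> | ->].
  by rewrite lift_perm_lift permE liftf.
by rewrite lift_perm_id.
Qed.

Lemma lift_perm_inj n (i : 'I_n.+1) :
  injective (fun js : 'I_n.+1 * {perm 'I_n} => lift_perm i js.1 js.2).
Proof.
move=> [j s] [j' s'] /= eq_lift.
have eq_j : j = j' by rewrite -(lift_perm_id i j s) eq_lift lift_perm_id.
congr (_, _) => //; apply/permP => k; apply: (@lift_inj _ j).
by rewrite -(lift_perm_lift i j s) eq_lift eq_j lift_perm_lift.
Qed.

Lemma bounded_below_lift_last n (s : {perm 'I_n.+1}) (j : 'I_n.+2) :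
  bounded_below (lift_perm ord_max j s) = (n <= j) && bounded_below s.
Proof.
have lift_bnd k : n <= j ->
    (lift ord_max k <= (lift_perm ord_max j s (lift ord_max k)).+1) = (k <= (s k).+1).
  move=> le_nj; rewrite lift_perm_lift /= /bump ltnNge leq_ord /=.
  have := ltn_ord (s k); have := leq_ord k.
  by case: (leqP j (s k)) => cmp * /=; apply/idP/idP; lia.
apply/forallP/andP => [bnd | [le_nj /forallP bnd] x].
  have le_nj : n <= j by have := bnd ord_max; rewrite lift_perm_id /=; lia.
  by split => //; apply/forallP => k; rewrite -lift_bnd.
case: (unliftP ord_max x) => [k -> | ->]; first by rewrite lift_bnd.
by rewrite lift_perm_id /=; lia.
Qed.

Lemma card_bounded_below m : #|[set pi : {perm 'I_m.+1} | bounded_below pi]| = 2 ^ m.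
Proof.
elim: m => [|m IHm].
  have -> : [set pi : {perm 'I_1} | bounded_below pi] = setT.
    by apply/setP => pi; rewrite !inE; apply/forallP => -[[|i] lt_i].
  by rewrite cardsT card_Sn.
pose g (js : 'I_m.+2 * {perm 'I_m.+1}) := lift_perm ord_max js.1 js.2.
have -> : [set pi : {perm 'I_m.+2} | bounded_below pi] =
          g @: setX [set j : 'I_m.+2 | m <= j] [set s | bounded_below s].
  apply/setP => pi; rewrite inE; apply/idP/imsetP => [|[[j s]]].
    have [s ->] := lift_perm_decomposition pi ord_max.
    rewrite bounded_below_lift_last => /andP [le_mj bnd].
    by exists (pi ord_max, s); rewrite ?inE ?le_mj.
  by rewrite !inE /= => /andP [le_mj bnd] ->; rewrite bounded_below_lift_last le_mj.
rewrite card_imset; last exact: lift_perm_inj.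
rewrite cardsX IHm card_ord_ge ?leqW // expnS; lia.
Qed.

Theorem mainTheorem5 (n : nat) : 1 <= n -> #|F_321_3142 n| = 2 ^ n.-1.
Proof.
case: n => [//|m] _; rewrite -(card_bounded_below m).
by apply: eq_card => pi; rewrite F_321_3142E inE.
Qed.
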